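(* Under the assumptions and notation of the context, let $(\mathbf x_N,\mathbf m_N,\mathbf p_N,\mathbf y_N)$ be the unique solution of the system (AV$_N$) and $(\mathbf m,\mathbf p,\mathbf y)$ the unique solution of (MF). Then there is a constant $C$ independent of $N$ and of the initial states such that $\sup_{0\le t\le T}\big(|\mathbf x_N(t)-\mathbf m(t)|+|\mathbf m_N(t)-\mathbf m(t)|+|\mathbf p_N(t)-\mathbf p(t)|+|\mathbf y_N(t)-\mathbf y(t)|\big)\le C|x^{(N)}(0)-m_0|$, where $x^{(N)}(0)=\frac1N\sum_{i=1}^Nx_i(0)$.
   Context: Fix integers $n,n_1\ge1$, $T>0$, constant matrices $A,G,\Gamma\in\mathbb R^{n\times n}$, $B\in\mathbb R^{n\times n_1}$, $\eta,m_0\in\mathbb R^n$, $\gamma>0$, symmetric $Q\ge0$, $H\ge0$ ($n\times n$), $R>0$ ($n_1\times n_1$); $x_1(0),\dots,x_N(0)\in\mathbb R^n$ deterministic. Write $\widehat Q=(I-\Gamma)^TQ(I-\Gamma)$, $|z|_M^2=z^TMz$, $\|h\|_{L^2}=(\int_0^T|h|^2dt)^{1/2}$. Assume (H1): with $\dot z=(A+G)z+g$, $z(0)=0$, $\bar J''(g)=\int_0^T\{-z^T\widehat Qz+\frac1\gamma|g|^2\}dt-z(T)^THz(T)$, there is $\epsilon_0>0$ with $\bar J''(g)\ge\epsilon_0\|g\|_{L^2}^2$ for all $g$; and (H2): for $\nu\in L^2(0,T;\mathbb R^{n_1})$ let $(z_i,z,q)$ solve $\dot z_i=Az_i+B\nu+Gz+\gamma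 q$, $\dot z=(A+G)z+\gamma q$, $\dot q=-(A+G)^Tq-(I-\Gamma)^TQ(z_i-\Gamma z)$, $z_i(0)=z(0)=0$, $q(T)=Hz_i(T)$, $\bar J^a(\nu)=\int_0^T\{|z_i-\Gamma z|_Q^2+\nu^TR\nu-\gamma|q|^2\}dt+|z_i(T)|_H^2$, and there is $\delta_0>0$ with $\bar J^a(\nu)\ge\delta_0\|\nu\|_{L^2}^2$ for all $\nu$. Assume (MF): $\dot{\mathbf m}=(A+G)\mathbf m+BR^{-1}B^T\mathbf y+\gamma\mathbf p$, $\dot{\mathbf p}=-(A+G)^T\mathbf p-(I-\Gamma)^TQ[\mathbf m-(\Gamma\mathbf m+\eta)]$, $\dot{\mathbf y}=-A^T\mathbf y+Q[\mathbf m-(\Gamma\mathbf m+\eta)]$, $\mathbf m(0)=m_0$, $\mathbf p(T)=H\mathbf m(T)$, $\mathbf y(T)=-H\mathbf m(T)$, has a unique solution, and set $\bar u^*=R^{-1}B^T\mathbf y$. (AV$_N$): $\dot{\mathbf x}_N=A\mathbf x_N+BR^{-1}B^T\mathbf y_N+G\mathbf m_N+\gamma\mathbf p_N$, $\dot{\mathbf m}_N=(A+G)\mathbf m_N+B\bar u^*+\gamma\mathbf p_N$, $\dot{\mathbf p}_N=-(A+G)^T\mathbf p_N-(I-\Gamma)^TQ[\mathbf x_N-(\Gamma\mathbf m_N+\eta)]$, $\dot{\mathbf y}_N=-A^T\mathbf y_N+Q[\mathbf x_N-(\Gamma\mathbf m_N+\eta)]$, with $\mathbf x_N(0)=\frac1N\sum_{i=1}^Nx_i(0)$,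 $\mathbf m_N(0)=m_0$, $\mathbf p_N(T)=H\mathbf x_N(T)$, $\mathbf y_N(T)=-H\mathbf x_N(T)$ (uniquely solvable under these assumptions). *)

From Stdlib Require Import Reals Lra Lia.
Open Scope R_scope.

(* Vectors in R^k are functions nat -> R (only indices < k matter);
   matrices are functions nat -> nat -> R. *)
Definition vec := nat -> R.
Definition mat := nat -> nat -> R.

Fixpoint sumR (k : nat) (f : nat -> R) : R :=
  match k with O => 0 | S k' => sumR k' f + f k' end.

Definition vadd (u v : vec) : vec := fun i => u i + v i.
Definition vopp (u : vec) : vec := fun i => - u i.
Definition vsub (u v : vec) : vec := fun i => u i - v i.
Definition vscal (c : R) (u : vec) : vec := fun i => c * u i.

Definition mv (k : nat) (M : mat) (v : vec) : vec :=
  fun i => sumR k (fun j => M i j * v j).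
Definition mm (k : nat) (M N : mat) : mat :=
  fun i l => sumR k (fun j => M i j * N j l).
Definition tr (M : mat) : mat := fun i j => M j i.
Definition madd (M N : mat) : mat := fun i j => M i j + N i j.
Definition msub (M N : mat) : mat := fun i j => M i j - N i j.
Definition idm : mat := fun i j => if Nat.eqb i j then 1 else 0.

Definition dot (k : nat) (u v : vec) : R := sumR k (fun i => u i * v i).
Definition qf (k : nat) (M : mat) (z : vec) : R := dot k z (mv k M z).
Definition vnorm (k : nat) (z : vec) : R := sqrt (dot k z z).

Definition symm (k : nat) (M : mat) : Prop :=
  forall i j, (i < k)%nat -> (j < k)%nat -> M i j = M j i.
Definition psd (k : nat) (M : mat) : Prop := forall z : vec, 0 <= qf k M z.
Definition pd (k : nat) (M : mat) : Prop :=
  forall z : vec, (exists i, (i < k)%nat /\ z i <> 0) -> 0 < qf k M z.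
Definition is_inv (k : nat) (M Minv : mat) : Prop :=
  forall i j, (i < k)%nat -> (j < k)%nat ->
    mm k M Minv i j = idm i j /\ mm k Minv M i j = idm i j.

Definition cont_on (k : nat) (T : R) (g : R -> vec) : Prop :=
  forall i, (i < k)%nat -> forall t, 0 <= t <= T ->
    limit1_in (fun s => g s i) (fun s => 0 <= s <= T) (g t i) t.

(* classical solution on [0,T] of  z' = F(t)  (F is the right-hand side
   already evaluated along the solution): continuous on [0,T],
   differentiable on (0,T) with derivative F. *)
Definition solves_on (k : nat) (T : R) (z : R -> vec) (F : R -> vec) : Prop :=
  cont_on k T z /\
  forall i, (i < k)%nat -> forall t, 0 < t < T ->
    derivable_pt_lim (fun s => z s i) t (F t i).

Definition veq (k : nat) (u v : vec) : Prop := forall i, (i < k)%nat -> u i = v i.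

Definition Rint (f : R -> R) (a b v : R) : Prop :=
  exists pr : Riemann_integrable f a b, RiemannInt pr = v.

Definition Qhat (n : nat) (Gam Q : mat) : mat :=
  mm n (tr (msub idm Gam)) (mm n Q (msub idm Gam)).

Definition H1 (n : nat) (T : R) (A G Gam Q H : mat) (gamma : R) : Prop :=
  exists eps0, 0 < eps0 /\
  forall g z : R -> vec,
    cont_on n T g ->
    solves_on n T z (fun t => vadd (mv n (madd A G) (z t)) (g t)) ->
    veq n (z 0) (fun _ => 0) ->
    forall J L,
      Rint (fun t => - qf n (Qhat n Gam Q) (z t) + / gamma * dot n (g t) (g t)) 0 T J ->
      Rint (fun t => dot n (g t) (g t)) 0 T L ->
      J - qf n H (z T) >= eps0 * L.

Definition H2 (n n1 : nat) (T : R) (A G Gam B Q H Rm : mat) (gamma : R) : Prop :=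
  exists delta0, 0 < delta0 /\
  forall nu zi z q : R -> vec,
    cont_on n1 T nu ->
    solves_on n T zi (fun t => vadd (vadd (vadd (mv n A (zi t)) (mv n1 B (nu t)))
                                          (mv n G (z t))) (vscal gamma (q t))) ->
    solves_on n T z (fun t => vadd (mv n (madd A G) (z t)) (vscal gamma (q t))) ->
    solves_on n T q (fun t => vsub (vopp (mv n (tr (madd A G)) (q t)))
                                   (mv n (tr (msub idm Gam))
                                      (mv n Q (vsub (zi t) (mv n Gam (z t)))))) ->
    veq n (zi 0) (fun _ => 0) -> veq n (z 0) (fun _ => 0) ->
    veq n (q T) (mv n H (zi T)) ->
    forall J L,
      Rint (fun t => qf n Q (vsub (zi t) (mv n Gam (z t))) + qf n1 Rm (nu t)
                     - gamma * dot n (q t) (q t)) 0 T J ->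
      Rint (fun t => dot n1 (nu t) (nu t)) 0 T L ->
      J + qf n H (zi T) >= delta0 * L.

Definition MF_sol (n n1 : nat) (T : R) (A G Gam B Q H Rinv : mat) (eta m0 : vec)
    (gamma : R) (m p y : R -> vec) : Prop :=
  solves_on n T m (fun t => vadd (vadd (mv n (madd A G) (m t))
                                   (mv n1 B (mv n1 Rinv (mv n (tr B) (y t)))))
                              (vscal gamma (p t))) /\
  solves_on n T p (fun t => vsub (vopp (mv n (tr (madd A G)) (p t)))
                      (mv n (tr (msub idm Gam))
                         (mv n Q (vsub (m t) (vadd (mv n Gam (m t)) eta))))) /\
  solves_on n T y (fun t => vadd (vopp (mv n (tr A) (y t)))
                      (mv n Q (vsub (m t) (vadd (mv n Gam (m t)) eta)))) /\
  veq n (m 0) m0 /\ veq n (p T) (mv n H (m T)) /\ veq n (y T) (vopp (mv n H (m T))).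

(* average initial state  x^{(N)}(0) = (1/N) sum_{i<N} x_i(0)  (agents indexed 0..N-1) *)
Definition avg0 (N : nat) (x0 : nat -> vec) : vec :=
  fun i => / INR N * sumR N (fun k => x0 k i).

(* (AV_N), with ubar* = R^{-1} B^T y where y is the (MF) solution *)
Definition AV_sol (n n1 : nat) (T : R) (A G Gam B Q H Rinv : mat) (eta m0 : vec)
    (gamma : R) (y : R -> vec) (N : nat) (x0 : nat -> vec)
    (xN mN pN yN : R -> vec) : Prop :=
  solves_on n T xN (fun t => vadd (vadd (vadd (mv n A (xN t))
                                   (mv n1 B (mv n1 Rinv (mv n (tr B) (yN t)))))
                                   (mv n G (mN t))) (vscal gamma (pN t))) /\
  solves_on n T mN (fun t => vadd (vadd (mv n (madd A G) (mN t))
                                   (mv n1 B (mv n1 Rinv (mv n (tr B) (y t)))))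
                              (vscal gamma (pN t))) /\
  solves_on n T pN (fun t => vsub (vopp (mv n (tr (madd A G)) (pN t)))
                      (mv n (tr (msub idm Gam))
                         (mv n Q (vsub (xN t) (vadd (mv n Gam (mN t)) eta))))) /\
  solves_on n T yN (fun t => vadd (vopp (mv n (tr A) (yN t)))
                      (mv n Q (vsub (xN t) (vadd (mv n Gam (mN t)) eta)))) /\
  veq n (xN 0) (avg0 N x0) /\ veq n (mN 0) m0 /\
  veq n (pN T) (mv n H (xN T)) /\ veq n (yN T) (vopp (mv n H (xN T))).

From Stdlib Require Import Reals Lra Lia FunctionalExtensionality List Classical.
Open Scope R_scope.

(* The deviations (x_N - m, m_N - m, p_N - p, y_N - y) solve a linear forward-backward system
   driven only by d = x^(N)(0) - m_0.  Along it, the derivative of <y, x - m> - <p, m> is the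
   integrand of (H2) with control R^-1 B^T y, so for d = 0 (H2) forces the control to vanish;
   then x = m, the derivative of <p, m> is the integrand of (H1) with g = gamma p, so p = 0,
   and Gronwall kills the remaining components.  Hence the system has at most one solution
   for each d, and the d for which it is solvable form a subspace of R^n.  Expanding d in a
   basis of this subspace and superposing fixed solutions, each bounded on [0,T], gives a
   solution of size at most C |d|, which by uniqueness is the deviation itself. *)

Lemma sumR_ext k f g : (forall i, (i < k)%nat -> f i = g i) -> sumR k f = sumR k g.
Proof.
  induction k as [|k IH]; intros Hfg; simpl; [reflexivity|].
  rewrite IH, (Hfg k) by (lia || intros; apply Hfg; lia); reflexivity.
Qed.

Lemma sumR_0 k : sumR k (fun _ => 0) = 0.
Proof. induction k; simpl; [|rewrite IHk]; ring. Qed.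

Lemma sumR_add k f g : sumR k (fun i => f i + g i) = sumR k f + sumR k g.
Proof. induction k; simpl; [|rewrite IHk]; ring. Qed.

Lemma sumR_sub k f g : sumR k (fun i => f i - g i) = sumR k f - sumR k g.
Proof. induction k; simpl; [|rewrite IHk]; ring. Qed.

Lemma sumR_opp k f : sumR k (fun i => - f i) = - sumR k f.
Proof. induction k; simpl; [|rewrite IHk]; ring. Qed.

Lemma sumR_scal k c f : sumR k (fun i => c * f i) = c * sumR k f.
Proof. induction k; simpl; [|rewrite IHk]; ring. Qed.

Lemma sumR_swap k l (F : nat -> nat -> R) :
  sumR k (fun i => sumR l (F i)) = sumR l (fun j => sumR k (fun i => F i j)).
Proof.
  induction k; simpl; [now rewrite sumR_0|].
  now rewrite IHk, <- sumR_add.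
Qed.

Lemma sumR_le k f g : (forall i, (i < k)%nat -> f i <= g i) -> sumR k f <= sumR k g.
Proof.
  induction k as [|k IH]; intros Hfg; simpl; [lra|].
  pose proof (Hfg k ltac:(lia)); pose proof (IH ltac:(intros; apply Hfg; lia)); lra.
Qed.

Lemma sumR_ge0 k f : (forall i, (i < k)%nat -> 0 <= f i) -> 0 <= sumR k f.
Proof. intros Hf; rewrite <- (sumR_0 k); now apply sumR_le. Qed.

Lemma sumR_abs k f : Rabs (sumR k f) <= sumR k (fun i => Rabs (f i)).
Proof.
  induction k; simpl; [rewrite Rabs_R0; lra|].
  eapply Rle_trans; [apply Rabs_triang|lra].
Qed.

Lemma sumR_term_le k f i : (i < k)%nat -> (forall j, (j < k)%nat -> 0 <= f j) -> f i <= sumR k f.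
Proof.
  induction k as [|k IH]; intros Hi Hf; [lia|simpl].
  assert (0 <= sumR k f) by (apply sumR_ge0; intros; apply Hf; lia).
  destruct (Nat.eq_dec i k) as [->|Hik]; [lra|].
  pose proof (IH ltac:(lia) ltac:(intros; apply Hf; lia)); pose proof (Hf k ltac:(lia)); lra.
Qed.

Lemma sumR_delta k f j : (j < k)%nat -> (forall i, (i < k)%nat -> i <> j -> f i = 0) ->
  sumR k f = f j.
Proof.
  induction k as [|k IH]; intros Hj Hf; [lia|simpl].
  destruct (Nat.eq_dec j k) as [->|Hjk].
  - rewrite (sumR_ext k f (fun _ => 0)), sumR_0 by (intros; apply Hf; lia); ring.
  - rewrite IH, (Hf k) by (lia || intros; apply Hf; lia); ring.
Qed.

Definition vcomb (a : R) (u : vec) (b : R) (v : vec) : vec := fun i => a * u i + b * v i.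

Lemma mv_ext k M u v : veq k u v -> mv k M u = mv k M v.
Proof.
  intros Huv; apply functional_extensionality; intro i.
  apply sumR_ext; intros; now rewrite Huv.
Qed.

Ltac mv_linear :=
  apply functional_extensionality; intro;
  unfold mv, vcomb, vadd, vsub, vscal, madd, msub;
  rewrite <- ?sumR_scal, <- ?sumR_add, <- ?sumR_sub; apply sumR_ext; intros; ring.

Lemma mv_0 k M : mv k M (fun _ => 0) = fun _ => 0.
Proof.
  apply functional_extensionality; intro.
  transitivity (sumR k (fun _ => 0)); [apply sumR_ext; intros; ring|apply sumR_0].
Qed.

Lemma mv_vadd k M u v : mv k M (vadd u v) = vadd (mv k M u) (mv k M v).
Proof. mv_linear. Qed.

Lemma mv_vsub k M u v : mv k M (vsub u v) = vsub (mv k M u) (mv k M v).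
Proof. mv_linear. Qed.

Lemma mv_vscal k M c u : mv k M (vscal c u) = vscal c (mv k M u).
Proof. mv_linear. Qed.

Lemma mv_vcomb k M a u b v : mv k M (vcomb a u b v) = vcomb a (mv k M u) b (mv k M v).
Proof. mv_linear. Qed.

Lemma vsub_vcomb a u b v u' v' :
  vsub (vcomb a u b v) (vcomb a u' b v') = vcomb a (vsub u u') b (vsub v v').
Proof. apply functional_extensionality; intro; unfold vsub, vcomb; ring. Qed.

Lemma mv_madd k M N u : mv k (madd M N) u = vadd (mv k M u) (mv k N u).
Proof. mv_linear. Qed.

Lemma mv_msub k M N u : mv k (msub M N) u = vsub (mv k M u) (mv k N u).
Proof. mv_linear. Qed.

Lemma mv_idm k u i : (i < k)%nat -> mv k idm u i = u i.
Proof.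
  intros Hi; unfold mv; rewrite (sumR_delta k _ i Hi).
  - unfold idm; rewrite Nat.eqb_refl; ring.
  - intros j _ Hji; unfold idm; destruct (Nat.eqb_spec i j); [lia|ring].
Qed.

Lemma mv_mm k M N v : mv k (mm k M N) v = mv k M (mv k N v).
Proof.
  apply functional_extensionality; intro i; unfold mv, mm.
  transitivity (sumR k (fun j => sumR k (fun l => M i l * N l j * v j))).
  { apply sumR_ext; intros; rewrite Rmult_comm, <- sumR_scal; apply sumR_ext; intros; ring. }
  rewrite sumR_swap; apply sumR_ext; intros.
  rewrite <- sumR_scal; apply sumR_ext; intros; ring.
Qed.

Lemma dot_comm k u v : dot k u v = dot k v u.
Proof. apply sumR_ext; intros; ring. Qed.

Lemma dot_ext k u u' v v' : veq k u u' -> veq k v v' -> dot k u v = dot k u' v'.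
Proof. intros Hu Hv; apply sumR_ext; intros; now rewrite Hu, Hv. Qed.

Lemma dot_tr a b M u v : dot a u (mv b (tr M) v) = dot b (mv a M u) v.
Proof.
  unfold dot, mv, tr.
  transitivity (sumR a (fun i => sumR b (fun j => u i * M j i * v j))).
  { apply sumR_ext; intros; rewrite <- sumR_scal; apply sumR_ext; intros; ring. }
  rewrite sumR_swap; apply sumR_ext; intros.
  rewrite Rmult_comm, <- sumR_scal; apply sumR_ext; intros; ring.
Qed.

Lemma dot_trl k M u v : dot k (mv k (tr M) u) v = dot k u (mv k M v).
Proof. now rewrite dot_comm, dot_tr, dot_comm. Qed.

Ltac dot_linear :=
  unfold dot, vcomb, vadd, vsub, vopp, vscal;
  rewrite <- ?sumR_scal, <- ?sumR_add, <- ?sumR_sub, <- ?sumR_opp; apply sumR_ext; intros; ring.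

Lemma dot_vaddl k u v w : dot k (vadd u v) w = dot k u w + dot k v w.
Proof. dot_linear. Qed.
Lemma dot_vaddr k u v w : dot k w (vadd u v) = dot k w u + dot k w v.
Proof. dot_linear. Qed.
Lemma dot_vsubl k u v w : dot k (vsub u v) w = dot k u w - dot k v w.
Proof. dot_linear. Qed.
Lemma dot_vsubr k u v w : dot k w (vsub u v) = dot k w u - dot k w v.
Proof. dot_linear. Qed.
Lemma dot_voppl k u w : dot k (vopp u) w = - dot k u w.
Proof. dot_linear. Qed.
Lemma dot_vscall k c u w : dot k (vscal c u) w = c * dot k u w.
Proof. dot_linear. Qed.
Lemma dot_vscalr k c u w : dot k w (vscal c u) = c * dot k w u.
Proof. dot_linear. Qed.
Lemma dot_vcombr k w a u b v : dot k w (vcomb a u b v) = a * dot k w u + b * dot k w v.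
Proof. dot_linear. Qed.

Lemma dot_0r k u : dot k u (fun _ => 0) = 0.
Proof. transitivity (sumR k (fun _ => 0)); [apply sumR_ext; intros; ring|apply sumR_0]. Qed.

Lemma dot_idmr k u v : dot k u (mv k idm v) = dot k u v.
Proof. apply dot_ext; intros i Hi; [|apply mv_idm]; auto. Qed.

Lemma dot_self_ge0 k u : 0 <= dot k u u.
Proof. apply sumR_ge0; intros; nra. Qed.

Lemma dot_self_eq0 k u : dot k u u = 0 -> veq k u (fun _ => 0).
Proof.
  intros H0 i Hi.
  pose proof (sumR_term_le k (fun j => u j * u j) i Hi ltac:(intros; nra)) as Hle.
  fold (dot k u u) in Hle; nra.
Qed.

Definition norm1 (k : nat) (u : vec) : R := sumR k (fun i => Rabs (u i)).

Lemma norm1_ge0 k u : 0 <= norm1 k u.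
Proof. apply sumR_ge0; intros; apply Rabs_pos. Qed.

Lemma norm1_ext k u v : veq k u v -> norm1 k u = norm1 k v.
Proof. intros Huv; apply sumR_ext; intros; now rewrite Huv. Qed.

Lemma norm1_vcomb k a u b v : norm1 k (vcomb a u b v) <= Rabs a * norm1 k u + Rabs b * norm1 k v.
Proof.
  unfold norm1, vcomb; rewrite <- !sumR_scal, <- sumR_add; apply sumR_le; intros.
  eapply Rle_trans; [apply Rabs_triang|]; rewrite !Rabs_mult; lra.
Qed.

Lemma vnorm_le_norm1 k u : vnorm k u <= norm1 k u.
Proof.
  unfold vnorm; rewrite <- (sqrt_square (norm1 k u)) by apply norm1_ge0.
  apply sqrt_le_1; [apply dot_self_ge0|pose proof (norm1_ge0 k u); nra|].
  induction k; unfold dot, norm1 in *; simpl; [lra|].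
  pose proof (sumR_ge0 k (fun i => Rabs (u i)) ltac:(intros; apply Rabs_pos)).
  pose proof (Rabs_pos (u k)); pose proof (Rsqr_abs (u k)); unfold Rsqr in *; nra.
Qed.

Lemma Rabs_le_vnorm k u i : (i < k)%nat -> Rabs (u i) <= vnorm k u.
Proof.
  intros Hi; unfold vnorm; rewrite <- sqrt_Rsqr_abs.
  apply sqrt_le_1; [apply Rle_0_sqr|apply dot_self_ge0|].
  apply (sumR_term_le k (fun j => u j * u j)); auto; intros; nra.
Qed.

Lemma Rabs_dot_le k u v : Rabs (dot k u v) <= norm1 k u * vnorm k v.
Proof.
  eapply Rle_trans; [apply sumR_abs|]; unfold norm1; rewrite Rmult_comm, <- sumR_scal.
  apply sumR_le; intros; rewrite Rabs_mult, Rmult_comm.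
  apply Rmult_le_compat_r; [apply Rabs_pos|now apply Rabs_le_vnorm].
Qed.

Definition mnorm1 (k : nat) (M : mat) : R := sumR k (fun i => sumR k (fun j => Rabs (M i j))).

Lemma Rabs_quad_le k M u : Rabs (dot k u (mv k M u)) <= mnorm1 k M * dot k u u.
Proof.
  set (S := dot k u u).
  transitivity (sumR k (fun i => sumR k (fun j => Rabs (M i j) * S))).
  2:{ right; unfold mnorm1; rewrite Rmult_comm, <- sumR_scal; apply sumR_ext; intros.
      rewrite <- sumR_scal; apply sumR_ext; intros; ring. }
  unfold dot at 1, mv; eapply Rle_trans; [apply sumR_abs|]; apply sumR_le; intros i Hi.
  rewrite <- sumR_scal; eapply Rle_trans; [apply sumR_abs|]; apply sumR_le; intros j Hj.
  assert (Hui : u i * u i <= S) by (apply (sumR_term_le k (fun l => u l * u l)); auto; intros; nra).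
  assert (Huj : u j * u j <= S) by (apply (sumR_term_le k (fun l => u l * u l)); auto; intros; nra).
  pose proof (Rsqr_abs (u i)); pose proof (Rsqr_abs (u j)); unfold Rsqr in *.
  pose proof (Rabs_pos (u i)); pose proof (Rabs_pos (u j)).
  assert (Rabs (u i) * Rabs (u j) <= S) by nra.
  rewrite !Rabs_mult, (Rmult_comm (Rabs (u i))), Rmult_assoc, (Rmult_comm (Rabs (u j))).
  apply Rmult_le_compat_l; [apply Rabs_pos|lra].
Qed.

(** * Coordinates on a subspace of R^k *)

Fixpoint expand (k : nat) (l : list (vec * vec)) (d : vec) : vec :=
  match l with
  | nil => fun _ => 0
  | (b, c) :: l' => vcomb (dot k c d) b 1 (expand k l' d)
  end.

Definition unit_vec (j : nat) : vec := fun i => if Nat.eqb i j then 1 else 0.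

Lemma dot_unit_vec k j d : (j < k)%nat -> dot k (unit_vec j) d = d j.
Proof.
  intros Hj; unfold dot; rewrite (sumR_delta k _ j Hj); unfold unit_vec.
  - rewrite Nat.eqb_refl; ring.
  - intros i _ Hij; destruct (Nat.eqb_spec i j); [lia|ring].
Qed.

Lemma expand_vcomb k l a u b v i :
  expand k l (vcomb a u b v) i = a * expand k l u i + b * expand k l v i.
Proof.
  induction l as [|[bv c] l IH]; simpl; [ring|].
  rewrite dot_vcombr; unfold vcomb at 1 3 4; rewrite IH; ring.
Qed.

Lemma expand_shift k j l d0 d i : (j < k)%nat ->
  expand k (map (fun bc => (fst bc, vsub (snd bc) (vscal (dot k (snd bc) d0) (unit_vec j)))) l) d i
  = expand k l d i - d j * expand k l d0 i.
Proof.
  intros Hj; induction l as [|[b c] l IH]; simpl; [ring|]; unfold vcomb; rewrite IH.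
  rewrite dot_vsubl, dot_vscall, dot_unit_vec by auto; ring.
Qed.

Section Subspace_expansion.
Variables (k : nat) (D : vec -> Prop).
Hypothesis HD : forall u v a b, D u -> D v -> D (vcomb a u b v).

(* Gaussian elimination: handle the coordinates 0, ..., j-1 one pivot at a time. *)
Lemma expansion_first_coords j : (j <= k)%nat ->
  exists l, (forall bc, In bc l -> D (fst bc)) /\
    forall d, D d -> (forall i, (j <= i < k)%nat -> d i = 0) -> veq k d (expand k l d).
Proof.
  induction j as [|j IH]; intros Hj.
  { exists nil; split; [intros _ []|intros d _ Hd i Hi; apply Hd; lia]. }
  destruct (IH ltac:(lia)) as [l [Hl Hexp]].
  destruct (classic (exists d0, D d0 /\ (forall i, (S j <= i < k)%nat -> d0 i = 0) /\ d0 j <> 0))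
    as [[d0' [HD0' [Hz' Hnz]]]|Hno].
  - set (d0 := vcomb (/ d0' j) d0' 0 d0').
    assert (HD0 : D d0) by now apply HD.
    assert (Hd0j : d0 j = 1) by (unfold d0, vcomb; field; auto).
    assert (Hz : forall i, (S j <= i < k)%nat -> d0 i = 0)
      by (intros i Hi; unfold d0, vcomb; rewrite (Hz' i Hi); ring).
    exists ((d0, unit_vec j) ::
      map (fun bc => (fst bc, vsub (snd bc) (vscal (dot k (snd bc) d0) (unit_vec j)))) l).
    split.
    + intros bc [<-|Hbc]; [exact HD0|].
      apply in_map_iff in Hbc; destruct Hbc as [bc' [<- Hbc']]; exact (Hl bc' Hbc').
    + intros d Hd Hdz i Hi; simpl; unfold vcomb; rewrite expand_shift, dot_unit_vec by lia.
      assert (Hd' : D (vcomb 1 d (- d j) d0)) by now apply HD.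
      enough (Hz'' : forall i, (j <= i < k)%nat -> vcomb 1 d (- d j) d0 i = 0).
      { pose proof (Hexp _ Hd' Hz'' i Hi) as Hexp'; rewrite expand_vcomb in Hexp'.
        unfold vcomb in Hexp'; lra. }
      intros i' Hi'; unfold vcomb; destruct (Nat.eq_dec i' j) as [->|Hne]; [rewrite Hd0j; ring|].
      rewrite Hdz, Hz by lia; ring.
  - exists l; split; auto; intros d Hd Hdz; apply Hexp; auto; intros i Hi.
    destruct (Nat.eq_dec i j) as [->|Hne]; [|apply Hdz; lia].
    destruct (Req_dec (d j) 0); auto; exfalso; apply Hno; eauto.
Qed.

Lemma subspace_expansion : exists l, (forall bc, In bc l -> D (fst bc)) /\
  forall d, D d -> veq k d (expand k l d).
Proof.
  destruct (expansion_first_coords k (le_n k)) as [l [Hl Hexp]].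
  exists l; split; auto; intros d Hd; apply Hexp; auto; intros; lia.
Qed.

End Subspace_expansion.

Definition rcont (T : R) (g : R -> R) (t : R) : Prop :=
  limit1_in g (fun s => 0 <= s <= T) (g t) t.

Lemma rcont_const T c t : rcont T (fun _ => c) t.
Proof. apply (limit_free (fun _ => c) _ 0). Qed.
Lemma rcont_plus T f g t : rcont T f t -> rcont T g t -> rcont T (fun s => f s + g s) t.
Proof. apply limit_plus. Qed.
Lemma rcont_minus T f g t : rcont T f t -> rcont T g t -> rcont T (fun s => f s - g s) t.
Proof. apply limit_minus. Qed.
Lemma rcont_mult T f g t : rcont T f t -> rcont T g t -> rcont T (fun s => f s * g s) t.
Proof. apply limit_mul. Qed.
Lemma rcont_opp T f t : rcont T f t -> rcont T (fun s => - f s) t.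
Proof. apply limit_Ropp. Qed.

Lemma rcont_of_continuity_pt T g t : continuity_pt g t -> rcont T g t.
Proof.
  intros Hg eps Heps; destruct (Hg eps Heps) as [alp [Halp Hlim]].
  exists alp; split; auto; intros s [_ Hs].
  destruct (Req_dec t s) as [<-|Hts].
  - simpl; unfold R_dist; rewrite Rminus_diag, Rabs_R0; auto.
  - apply Hlim; repeat split; auto.
Qed.

Lemma rcont_sumR T k (F : R -> nat -> R) t :
  (forall i, (i < k)%nat -> rcont T (fun s => F s i) t) -> rcont T (fun s => sumR k (F s)) t.
Proof.
  induction k; intros HF; simpl; [apply rcont_const|].
  apply rcont_plus; [apply IHk; intros|apply HF]; auto.
Qed.

Lemma cont_on_mv k l T M u : cont_on k T u -> cont_on l T (fun s => mv k M (u s)).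
Proof.
  intros Hu i _ t Ht; apply (rcont_sumR T k (fun s j => M i j * u s j)); intros.
  apply rcont_mult; [apply rcont_const|now apply Hu].
Qed.

Lemma cont_on_vsub k T u v : cont_on k T u -> cont_on k T v ->
  cont_on k T (fun s => vsub (u s) (v s)).
Proof. intros Hu Hv i Hi t Ht; unfold vsub; apply rcont_minus; [apply Hu|apply Hv]; auto. Qed.

Lemma cont_on_vscal k T c u : cont_on k T u -> cont_on k T (fun s => vscal c (u s)).
Proof. intros Hu i Hi t Ht; unfold vscal; apply rcont_mult; [apply rcont_const|apply Hu]; auto. Qed.

Lemma rcont_dot k T u v t : cont_on k T u -> cont_on k T v -> 0 <= t <= T ->
  rcont T (fun s => dot k (u s) (v s)) t.
Proof.
  intros Hu Hv Ht; apply (rcont_sumR T k (fun s j => u s j * v s j)); intros.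
  apply rcont_mult; [apply Hu|apply Hv]; auto.
Qed.

Lemma dlim_plus f g t a b : derivable_pt_lim f t a -> derivable_pt_lim g t b ->
  derivable_pt_lim (fun s => f s + g s) t (a + b).
Proof. apply derivable_pt_lim_plus. Qed.
Lemma dlim_minus f g t a b : derivable_pt_lim f t a -> derivable_pt_lim g t b ->
  derivable_pt_lim (fun s => f s - g s) t (a - b).
Proof. apply derivable_pt_lim_minus. Qed.
Lemma dlim_mult f g t a b : derivable_pt_lim f t a -> derivable_pt_lim g t b ->
  derivable_pt_lim (fun s => f s * g s) t (a * g t + f t * b).
Proof. apply derivable_pt_lim_mult. Qed.
Lemma dlim_const c t : derivable_pt_lim (fun _ => c) t 0.
Proof. apply derivable_pt_lim_const. Qed.
Lemma dlim_eq f t a b : a = b -> derivable_pt_lim f t a -> derivable_pt_lim f t b.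
Proof. now intros ->. Qed.

Lemma dlim_scal c f t a : derivable_pt_lim f t a -> derivable_pt_lim (fun s => c * f s) t (c * a).
Proof.
  intros Hf; apply (dlim_eq _ _ (0 * f t + c * a)); [ring|].
  apply dlim_mult; auto using dlim_const.
Qed.

Lemma dlim_sumR k (F : R -> nat -> R) t (d : nat -> R) :
  (forall i, (i < k)%nat -> derivable_pt_lim (fun s => F s i) t (d i)) ->
  derivable_pt_lim (fun s => sumR k (F s)) t (sumR k d).
Proof.
  induction k; intros HF; simpl; [apply dlim_const|].
  apply dlim_plus; [apply IHk; intros|apply HF]; auto.
Qed.

Lemma solves_dot k T u v F G t : solves_on k T u F -> solves_on k T v G -> 0 < t < T ->
  derivable_pt_lim (fun s => dot k (u s) (v s)) t (dot k (F t) (v t) + dot k (u t) (G t)).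
Proof.
  intros [_ Hu] [_ Hv] Ht; unfold dot; rewrite <- sumR_add.
  apply (dlim_sumR k (fun s j => u s j * v s j)); intros; apply dlim_mult; auto.
Qed.

Lemma solves_ext k T x F F' : solves_on k T x F ->
  (forall t i, (i < k)%nat -> 0 < t < T -> F t i = F' t i) -> solves_on k T x F'.
Proof. intros [Hc Hd] HF; split; auto; intros i Hi t Ht; rewrite <- HF; auto. Qed.

Lemma solves_vcomb k T a b x1 x2 F1 F2 : solves_on k T x1 F1 -> solves_on k T x2 F2 ->
  solves_on k T (fun t => vcomb a (x1 t) b (x2 t)) (fun t => vcomb a (F1 t) b (F2 t)).
Proof.
  intros [c1 d1] [c2 d2]; split; intros i Hi t Ht; unfold vcomb.
  - apply (rcont_plus T (fun s => a * x1 s i) (fun s => b * x2 s i));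
      apply rcont_mult; [apply rcont_const|apply c1|apply rcont_const|apply c2]; auto.
  - apply (dlim_plus (fun s => a * x1 s i) (fun s => b * x2 s i)); apply dlim_scal; auto.
Qed.

Lemma solves_vsub k T x1 x2 F1 F2 : solves_on k T x1 F1 -> solves_on k T x2 F2 ->
  solves_on k T (fun t => vsub (x1 t) (x2 t)) (fun t => vsub (F1 t) (F2 t)).
Proof.
  intros [c1 d1] [c2 d2]; split; intros i Hi t Ht; unfold vsub.
  - apply (rcont_minus T (fun s => x1 s i) (fun s => x2 s i)); [apply c1|apply c2]; auto.
  - apply (dlim_minus (fun s => x1 s i) (fun s => x2 s i)); auto.
Qed.

Lemma solves_0 k T F : (forall t i, (i < k)%nat -> 0 < t < T -> F t i = 0) ->
  solves_on k T (fun _ _ => 0) F.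
Proof. intros HF; split; intros i Hi t Ht; [apply rcont_const|rewrite HF; auto; apply dlim_const]. Qed.

(** * Calculus on [0,T] *)

(* Stdlib's MVT and FTC ask for continuity at every point of R; composing with clamp
   turns continuity relative to [0,T] into that. *)
Definition clamp (T s : R) : R := Rmax 0 (Rmin T s).

Lemma clamp_in T s : 0 <= T -> 0 <= clamp T s <= T.
Proof. intros; unfold clamp, Rmax, Rmin; repeat destruct Rle_dec; lra. Qed.

Lemma clamp_id T s : 0 <= s <= T -> clamp T s = s.
Proof. intros; unfold clamp, Rmax, Rmin; repeat destruct Rle_dec; lra. Qed.

Lemma clamp_lipschitz T s x : 0 <= T -> Rabs (clamp T s - clamp T x) <= Rabs (s - x).
Proof.
  intros; unfold clamp, Rmax, Rmin; repeat destruct Rle_dec; unfold Rabs; repeat destruct Rcase_abs; lra.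
Qed.

Lemma continuity_pt_clamp T g : 0 <= T -> (forall t, 0 <= t <= T -> rcont T g t) ->
  forall x, continuity_pt (fun s => g (clamp T s)) x.
Proof.
  intros HT Hg x eps Heps.
  destruct (Hg (clamp T x) (clamp_in T x HT) eps Heps) as [alp [Halp Hlim]].
  exists alp; split; auto; intros y [_ Hy]; apply Hlim; split; [now apply clamp_in|].
  simpl in *; unfold R_dist in *; eapply Rle_lt_trans; [apply clamp_lipschitz|]; auto.
Qed.

Lemma dlim_local T f g t l : 0 < t < T -> (forall s, 0 < s < T -> f s = g s) ->
  derivable_pt_lim f t l -> derivable_pt_lim g t l.
Proof.
  intros Ht Hfg Hf eps Heps; destruct (Hf eps Heps) as [d Hd].
  assert (Hpos : 0 < Rmin d (Rmin t (T - t))) by (apply Rmin_pos; [apply cond_pos|apply Rmin_pos; lra]).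
  exists (mkposreal _ Hpos); intros h Hh Hhd; simpl in Hhd.
  pose proof (Rmin_l d (Rmin t (T - t))); pose proof (Rmin_r d (Rmin t (T - t))).
  pose proof (Rmin_l t (T - t)); pose proof (Rmin_r t (T - t)).
  assert (Hth : 0 < t + h < T) by (revert Hhd; unfold Rabs; destruct Rcase_abs; intros; lra).
  rewrite <- (Hfg (t + h)), <- (Hfg t) by lra; apply Hd; auto; lra.
Qed.

Lemma nonincreasing_of_deriv_nonpos T f f' : 0 < T -> (forall t, 0 <= t <= T -> rcont T f t) ->
  (forall t, 0 < t < T -> derivable_pt_lim f t (f' t)) -> (forall t, 0 < t < T -> f' t <= 0) ->
  forall x y, 0 <= x -> x <= y -> y <= T -> f y <= f x.
Proof.
  intros HT Hc Hd Hneg x y Hx Hxy HyT; destruct (Req_dec x y) as [<-|Hne]; [lra|].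
  set (g := fun s => f (clamp T s)).
  assert (Hdg : forall c, x < c < y -> derivable_pt_lim g c (f' c)).
  { intros c Hc'; apply (dlim_local T f g c); [lra| |apply Hd; lra].
    intros; unfold g; rewrite clamp_id; lra. }
  pose (prg := fun c (P : x < c < y) => exist (fun l => derivable_pt_abs g c l) (f' c) (Hdg c P)).
  pose (prid := fun c (P : x < c < y) => derivable_pt_id c).
  destruct (MVT g id x y prg prid) as [c [P HP]]; [lra| | |].
  { intros; apply continuity_pt_clamp; auto; lra. }
  { intros; apply derivable_continuous_pt, derivable_pt_id. }
  unfold prg, prid, g, id in HP; rewrite derive_pt_id, !clamp_id in HP by lra; simpl in HP.
  assert (f' c <= 0) by (apply Hneg; lra); nra.
Qed.

Lemma const_of_deriv_0 T f : 0 < T -> (forall t, 0 <= t <= T -> rcont T f t) ->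
  (forall t, 0 < t < T -> derivable_pt_lim f t 0) -> forall t, 0 <= t <= T -> f t = f 0.
Proof.
  intros HT Hc Hd t Ht.
  assert (f t <= f 0) by (apply (nonincreasing_of_deriv_nonpos T f (fun _ => 0)); auto; intros; lra).
  assert (- f t <= - f 0).
  { apply (nonincreasing_of_deriv_nonpos T (fun s => - f s) (fun _ => - 0)); intros; try lra.
    - now apply rcont_opp, Hc.
    - now apply (derivable_pt_lim_opp f), Hd. }
  lra.
Qed.

Lemma antiderivative T g : 0 < T -> (forall t, 0 <= t <= T -> rcont T g t) ->
  exists F, (forall t, 0 <= t <= T -> rcont T F t) /\
    (forall t, 0 < t < T -> derivable_pt_lim F t (g t)) /\ Rint g 0 T (F T - F 0).
Proof.
  intros HT Hg; assert (h : 0 <= T) by lra.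
  set (g' := fun s => g (clamp T s)).
  assert (Hg' : forall x, 0 <= x <= T -> continuity_pt g' x) by (intros; now apply continuity_pt_clamp).
  assert (Hext : forall x, 0 <= x <= T -> g' x = g x) by (intros; unfold g'; now rewrite clamp_id).
  set (F := primitive h (FTC_P1 h Hg')).
  assert (HF : forall t, 0 <= t <= T -> derivable_pt_lim F t (g' t))
    by (intros; now apply RiemannInt_P28).
  pose (pr' := continuity_implies_RiemannInt h Hg').
  assert (pr : Riemann_integrable g 0 T).
  { apply (Riemann_integrable_ext (f := g')); [|exact pr'].
    unfold Rmin, Rmax; destruct Rle_dec; [|lra]; apply Hext. }
  exists F; repeat split.
  - intros t Ht; apply rcont_of_continuity_pt, derivable_continuous_pt.
    exists (g' t); now apply HF.
  - intros t Ht; rewrite <- Hext by lra; apply HF; lra.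
  - exists pr; rewrite (RiemannInt_P18 pr pr' h) by (intros; symmetry; apply Hext; lra).
    apply RiemannInt_P20.
Qed.

Lemma Rint_exists T g : 0 < T -> (forall t, 0 <= t <= T -> rcont T g t) -> exists L, Rint g 0 T L.
Proof. intros HT Hg; destruct (antiderivative T g HT Hg) as [F [_ [_ HF]]]; eauto. Qed.

Lemma Rint_of_deriv T Phi g : 0 < T -> (forall t, 0 <= t <= T -> rcont T Phi t) ->
  (forall t, 0 < t < T -> derivable_pt_lim Phi t (g t)) ->
  (forall t, 0 <= t <= T -> rcont T g t) -> Rint g 0 T (Phi T - Phi 0).
Proof.
  intros HT HPhi HdPhi Hg; destruct (antiderivative T g HT Hg) as [F [HFc [HdF HF]]].
  replace (Phi T - Phi 0) with (F T - F 0); auto.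
  enough (Phi T - F T = Phi 0 - F 0) by lra.
  apply (const_of_deriv_0 T (fun s => Phi s - F s)); [auto| |intros|lra].
  - intros; apply rcont_minus; auto.
  - apply (dlim_eq _ _ (g t - g t)); [ring|apply dlim_minus; auto].
Qed.

Lemma rcont_eq0_of_interior T g t : 0 < T -> 0 <= t <= T -> rcont T g t ->
  (forall s, 0 < s < T -> g s = 0) -> g t = 0.
Proof.
  intros HT Ht Hc Hz; destruct (Req_dec (g t) 0) as [|Hne]; auto; exfalso.
  destruct (Hc _ (Rabs_pos_lt _ Hne)) as [alp [Halp Hlim]].
  (* an interior point within alp of t: move from t towards T/2 by a fraction lam *)
  set (lam := Rmin (1/2) (alp / (2 * T))).
  assert (Hl1 : 0 < lam) by (apply Rmin_pos; [lra|apply Rdiv_lt_0_compat; lra]).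
  assert (Hl2 : lam <= 1/2) by apply Rmin_l.
  assert (Hl3 : lam * (2 * T) <= alp).
  { pose proof (Rmin_r (1/2) (alp / (2 * T))) as Hr; fold lam in Hr.
    apply (Rmult_le_compat_r (2 * T)) in Hr; [|lra]; field_simplify in Hr; lra. }
  set (s := (1 - lam) * t + lam * (T / 2)).
  assert (Hs : 0 < s < T) by (unfold s; split; nra).
  assert (Hst : Rabs (s - t) < alp).
  { unfold s; replace ((1 - lam) * t + lam * (T / 2) - t) with (lam * (T / 2 - t)) by ring.
    rewrite Rabs_mult, (Rabs_pos_eq lam) by lra.
    assert (Rabs (T / 2 - t) <= T / 2) by (unfold Rabs; destruct Rcase_abs; lra); nra. }
  specialize (Hlim s (conj (conj (Rlt_le _ _ (proj1 Hs)) (Rlt_le _ _ (proj2 Hs))) Hst)).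
  simpl in Hlim; unfold R_dist in Hlim; rewrite Hz, Rminus_0_l, Rabs_Ropp in Hlim by auto; lra.
Qed.

Lemma ge0_Rint_nonpos_eq0 T g L : 0 < T -> (forall t, 0 <= t <= T -> rcont T g t) ->
  (forall t, 0 <= t <= T -> 0 <= g t) -> Rint g 0 T L -> L <= 0 ->
  forall t, 0 <= t <= T -> g t = 0.
Proof.
  intros HT Hg Hpos [pr HL] HL0.
  destruct (antiderivative T g HT Hg) as [F [HFc [HdF [pr' HF]]]].
  rewrite (RiemannInt_P5 pr pr') in HL.
  assert (Hmono : forall x y, 0 <= x -> x <= y -> y <= T -> F x <= F y).
  { intros x y Hx Hxy HyT; enough (- F y <= - F x) by lra.
    apply (nonincreasing_of_deriv_nonpos T (fun s => - F s) (fun s => - g s)); auto; intros.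
    - now apply rcont_opp, HFc.
    - now apply (derivable_pt_lim_opp F), HdF.
    - pose proof (Hpos t); lra. }
  assert (HFconst : forall s, 0 <= s <= T -> F s = F 0).
  { intros s Hs; pose proof (Hmono 0 s); pose proof (Hmono s T); lra. }
  intros t Ht; apply (rcont_eq0_of_interior T g t); auto; intros s Hs.
  apply (uniqueness_limite F s); [now apply HdF|].
  apply (dlim_local T (fun _ => F 0) F s); [auto|intros; symmetry; apply HFconst; lra|apply dlim_const].
Qed.

Lemma rcont_bounded T g : 0 < T -> (forall t, 0 <= t <= T -> rcont T g t) ->
  exists M, forall t, 0 <= t <= T -> Rabs (g t) <= M.
Proof.
  intros HT Hg; assert (h : 0 <= T) by lra.
  set (g' := fun s => Rabs (g (clamp T s))).
  assert (Hg' : forall x, 0 <= x <= T -> continuity_pt g' x).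
  { intros; apply (continuity_pt_comp (fun s => g (clamp T s)) Rabs);
      [now apply continuity_pt_clamp|apply Rcontinuity_abs]. }
  destruct (continuity_ab_maj g' 0 T h Hg') as [tmax [Hmax _]].
  exists (g' tmax); intros t Ht; specialize (Hmax t Ht); unfold g' in Hmax; now rewrite clamp_id in Hmax.
Qed.

Lemma sq_norm_Rint_nonpos_eq0 k T u L : 0 < T -> cont_on k T u ->
  Rint (fun t => dot k (u t) (u t)) 0 T L -> L <= 0 ->
  forall t, 0 <= t <= T -> veq k (u t) (fun _ => 0).
Proof.
  intros HT Hu HL HL0 t Ht; apply dot_self_eq0.
  apply (ge0_Rint_nonpos_eq0 T (fun t => dot k (u t) (u t)) L); auto.
  - intros; now apply rcont_dot.
  - intros; apply dot_self_ge0.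
Qed.

Lemma norm1_bounded k T u : 0 < T -> cont_on k T u ->
  exists M, forall t, 0 <= t <= T -> norm1 k (u t) <= M.
Proof.
  intros HT; induction k as [|k IH]; intros Hu.
  { exists 0; intros; unfold norm1; simpl; lra. }
  destruct IH as [M1 HM1]; [intros i Hi; apply Hu; lia|].
  destruct (rcont_bounded T (fun s => u s k) HT (Hu k ltac:(lia))) as [M2 HM2].
  exists (M1 + M2); intros t Ht; specialize (HM1 t Ht); specialize (HM2 t Ht).
  unfold norm1 in *; simpl; lra.
Qed.

(** * Linear homogeneous systems *)

Lemma dlim_exp_lin a t : derivable_pt_lim (fun s => exp (a * s)) t (a * exp (a * t)).
Proof.
  apply (dlim_eq _ _ (exp (a * t) * a)); [ring|].
  apply (derivable_pt_lim_comp (fun s => a * s) exp); [|apply derivable_pt_lim_exp].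
  apply (dlim_eq _ _ (a * 1)); [ring|apply dlim_scal, derivable_pt_lim_id].
Qed.

Section Linear_ODE.
Variables (k : nat) (T : R) (M : mat) (w : R -> vec).
Hypothesis HT : 0 < T.
Hypothesis Hw : solves_on k T w (fun t => mv k M (w t)).

(* |d/dt |w|^2| <= 2 K |w|^2 with K = mnorm1 k M. *)
Lemma weighted_sq_norm_nonincreasing sg x y : sg * sg = 1 -> 0 <= x -> x <= y -> y <= T ->
  let a := - 2 * sg * mnorm1 k M in
  sg * (exp (a * y) * dot k (w y) (w y)) <= sg * (exp (a * x) * dot k (w x) (w x)).
Proof.
  intros Hsg Hx Hxy HyT a; set (K := mnorm1 k M) in a.
  apply (nonincreasing_of_deriv_nonpos T (fun s => sg * (exp (a * s) * dot k (w s) (w s)))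
    (fun s => sg * (a * exp (a * s) * dot k (w s) (w s)
                    + exp (a * s) * (dot k (mv k M (w s)) (w s) + dot k (w s) (mv k M (w s)))))); auto.
  - intros t Ht; apply rcont_mult; [apply rcont_const|apply rcont_mult].
    + apply rcont_of_continuity_pt, derivable_continuous_pt.
      exists (a * exp (a * t)); apply dlim_exp_lin.
    + apply rcont_dot; auto; apply Hw.
  - intros t Ht; apply dlim_scal, (dlim_mult (fun s => exp (a * s))); [apply dlim_exp_lin|].
    now apply (solves_dot k T w w _ _ t Hw Hw).
  - intros t _; rewrite (dot_comm k (mv k M (w t))).
    pose proof (Rabs_quad_le k M (w t)) as Hb; fold K in Hb.
    pose proof (dot_self_ge0 k (w t)); pose proof (exp_pos (a * t)).
    assert (Hq : sg * dot k (w t) (mv k M (w t)) <= K * dot k (w t) (w t)).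
    { assert (Habs2 : Rabs sg * Rabs sg = 1) by (rewrite <- Rabs_mult, Hsg; apply Rabs_R1).
      assert (Habs : Rabs sg = 1) by (pose proof (Rabs_pos sg); nra).
      eapply Rle_trans; [apply RRle_abs|]; rewrite Rabs_mult, Habs, Rmult_1_l; exact Hb. }
    set (q := dot k (w t) (mv k M (w t))) in *; set (S := dot k (w t) (w t)) in *.
    replace (sg * (a * exp (a * t) * S + exp (a * t) * (q + q)))
      with (2 * exp (a * t) * (sg * q - (sg * sg) * K * S)) by (unfold a; ring).
    rewrite Hsg; nra.
Qed.

Lemma linear_ode_forward_0 : veq k (w 0) (fun _ => 0) ->
  forall t, 0 <= t <= T -> veq k (w t) (fun _ => 0).
Proof.
  intros H0 t Ht; apply dot_self_eq0.
  pose proof (weighted_sq_norm_nonincreasing 1 0 t ltac:(ring) ltac:(lra) ltac:(lra) ltac:(lra)) as Hle.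
  simpl in Hle; rewrite (dot_ext k (w 0) (fun _ => 0) (w 0) (fun _ => 0) H0 H0), dot_0r in Hle.
  pose proof (dot_self_ge0 k (w t)); pose proof (exp_pos (- 2 * 1 * mnorm1 k M * t)); nra.
Qed.

Lemma linear_ode_backward_0 : veq k (w T) (fun _ => 0) ->
  forall t, 0 <= t <= T -> veq k (w t) (fun _ => 0).
Proof.
  intros HT0 t Ht; apply dot_self_eq0.
  pose proof (weighted_sq_norm_nonincreasing (-1) t T ltac:(ring) ltac:(lra) ltac:(lra) ltac:(lra))
    as Hle.
  simpl in Hle; rewrite (dot_ext k (w T) (fun _ => 0) (w T) (fun _ => 0) HT0 HT0), dot_0r in Hle.
  pose proof (dot_self_ge0 k (w t)); pose proof (exp_pos (- 2 * -1 * mnorm1 k M * t)); nra.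
Qed.

End Linear_ODE.

(** * The error system *)

Section Error_system.
Variables (n n1 : nat) (T : R) (A G Gam B Q H Rinv : mat) (gamma : R).

Definition ctrl (Y : vec) : vec := mv n1 Rinv (mv n (tr B) Y).

Definition rhs_x (e f P Y : vec) : vec :=
  vadd (vadd (vadd (mv n A e) (mv n1 B (ctrl Y))) (mv n G f)) (vscal gamma P).
Definition rhs_m (f P : vec) : vec := vadd (mv n (madd A G) f) (vscal gamma P).
Definition rhs_p (e f P : vec) : vec :=
  vsub (vopp (mv n (tr (madd A G)) P)) (mv n (tr (msub idm Gam)) (mv n Q (vsub e (mv n Gam f)))).
Definition rhs_y (e f Y : vec) : vec := vadd (vopp (mv n (tr A) Y)) (mv n Q (vsub e (mv n Gam f))).

(* (e, f, P, Y) plays the role of (x_N - m, m_N - m, p_N - p, y_N - y) and d that of x^(N)(0) - m_0: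
   the affine terms eta and B ubar* cancel in the differences. *)
Record err_sys (d : vec) (e f P Y : R -> vec) : Prop := {
  err_e : solves_on n T e (fun t => rhs_x (e t) (f t) (P t) (Y t));
  err_f : solves_on n T f (fun t => rhs_m (f t) (P t));
  err_P : solves_on n T P (fun t => rhs_p (e t) (f t) (P t));
  err_Y : solves_on n T Y (fun t => rhs_y (e t) (f t) (Y t));
  err_e0 : veq n (e 0) d;
  err_f0 : veq n (f 0) (fun _ => 0);
  err_PT : veq n (P T) (mv n H (e T));
  err_YT : veq n (Y T) (vopp (mv n H (e T))) }.

Ltac linear_rhs :=
  intros t i Hi Ht; unfold rhs_x, rhs_m, rhs_p, rhs_y, ctrl;
  repeat rewrite ?mv_vcomb, ?vsub_vcomb; unfold vcomb, vadd, vsub, vopp, vscal; ring.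

Lemma err_sys_vcomb a b d1 e1 f1 P1 Y1 d2 e2 f2 P2 Y2 :
  err_sys d1 e1 f1 P1 Y1 -> err_sys d2 e2 f2 P2 Y2 ->
  err_sys (vcomb a d1 b d2) (fun t => vcomb a (e1 t) b (e2 t)) (fun t => vcomb a (f1 t) b (f2 t))
    (fun t => vcomb a (P1 t) b (P2 t)) (fun t => vcomb a (Y1 t) b (Y2 t)).
Proof.
  intros [He1 Hf1 HP1 HY1 He10 Hf10 HP1T HY1T] [He2 Hf2 HP2 HY2 He20 Hf20 HP2T HY2T].
  constructor.
  - eapply solves_ext; [apply (solves_vcomb _ _ _ _ _ _ _ _ He1 He2)|linear_rhs].
  - eapply solves_ext; [apply (solves_vcomb _ _ _ _ _ _ _ _ Hf1 Hf2)|linear_rhs].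
  - eapply solves_ext; [apply (solves_vcomb _ _ _ _ _ _ _ _ HP1 HP2)|linear_rhs].
  - eapply solves_ext; [apply (solves_vcomb _ _ _ _ _ _ _ _ HY1 HY2)|linear_rhs].
  - intros i Hi; unfold vcomb; now rewrite He10, He20.
  - intros i Hi; unfold vcomb; rewrite Hf10, Hf20; auto; ring.
  - intros i Hi; rewrite mv_vcomb; unfold vcomb; now rewrite HP1T, HP2T.
  - intros i Hi; rewrite mv_vcomb; unfold vcomb, vopp; rewrite HY1T, HY2T; auto; unfold vopp; ring.
Qed.

Lemma err_sys_init d d' e f P Y : err_sys d e f P Y -> veq n d d' -> err_sys d' e f P Y.
Proof. intros [? ? ? ? He0 ? ? ?] Hd; constructor; auto; intros i Hi; rewrite He0, Hd; auto. Qed.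

Lemma err_sys_0 : err_sys (fun _ => 0) (fun _ _ => 0) (fun _ _ => 0) (fun _ _ => 0) (fun _ _ => 0).
Proof.
  assert (Hv0 : vsub (fun _ => 0) (mv n Gam (fun _ => 0)) = fun _ => 0).
  { rewrite mv_0; apply functional_extensionality; intro; unfold vsub; ring. }
  constructor; try (apply solves_0; intros;
    unfold rhs_x, rhs_m, rhs_p, rhs_y, ctrl; rewrite ?Hv0, !mv_0; unfold vadd, vsub, vopp, vscal; ring);
    intros i Hi; rewrite ?mv_0; unfold vopp; ring.
Qed.

Lemma err_sys_of_AV_MF eta m0 m p y N x0 xN mN pN yN :
  MF_sol n n1 T A G Gam B Q H Rinv eta m0 gamma m p y ->
  AV_sol n n1 T A G Gam B Q H Rinv eta m0 gamma y N x0 xN mN pN yN ->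
  err_sys (vsub (avg0 N x0) m0)
    (fun t => vsub (xN t) (m t)) (fun t => vsub (mN t) (m t))
    (fun t => vsub (pN t) (p t)) (fun t => vsub (yN t) (y t)).
Proof.
  intros [Hm [Hp [Hy [Hm0 [HpT HyT]]]]] [Hx [HmN [HpN [HyN [Hx0 [HmN0 [HpNT HyNT]]]]]]].
  constructor; try (eapply solves_ext; [apply solves_vsub; eassumption|]; intros t i Hi Ht;
    unfold rhs_x, rhs_m, rhs_p, rhs_y, ctrl; repeat rewrite ?mv_vsub, ?mv_vadd, ?mv_madd, ?mv_vscal;
    unfold vadd, vsub, vscal, vopp; ring);
    intros i Hi; rewrite ?mv_vsub; unfold vsub, vopp;
    rewrite ?Hx0, ?HmN0, ?Hm0, ?HpNT, ?HpT, ?HyNT, ?HyT; auto; unfold vopp; ring.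
Qed.

Definition err_size (e f P Y : R -> vec) (t : R) : R :=
  norm1 n (e t) + norm1 n (f t) + norm1 n (P t) + norm1 n (Y t).

Lemma err_size_bounded d e f P Y : 0 < T -> err_sys d e f P Y ->
  exists M, forall t, 0 <= t <= T -> err_size e f P Y t <= M.
Proof.
  intros HT [He Hf HP HY _ _ _ _].
  destruct (norm1_bounded n T e HT (proj1 He)) as [M1 HM1].
  destruct (norm1_bounded n T f HT (proj1 Hf)) as [M2 HM2].
  destruct (norm1_bounded n T P HT (proj1 HP)) as [M3 HM3].
  destruct (norm1_bounded n T Y HT (proj1 HY)) as [M4 HM4].
  exists (M1 + M2 + M3 + M4); intros t Ht; unfold err_size.
  specialize (HM1 t Ht); specialize (HM2 t Ht); specialize (HM3 t Ht); specialize (HM4 t Ht); lra.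
Qed.

Lemma err_sys_expand_bound l : 0 < T ->
  (forall bc, In bc l -> exists e f P Y, err_sys (fst bc) e f P Y) ->
  exists C, forall d, exists e f P Y, err_sys (expand n l d) e f P Y /\
    forall t, 0 <= t <= T -> err_size e f P Y t <= C * vnorm n d.
Proof.
  intros HT; induction l as [|[b c] l IH]; intros Hl.
  { exists 0; intros d; exists (fun _ _ => 0), (fun _ _ => 0), (fun _ _ => 0), (fun _ _ => 0).
    split; [apply err_sys_0|intros t Ht; unfold err_size, norm1; rewrite !Rmult_0_l].
    rewrite (sumR_ext n _ (fun _ => 0)) by (intros; apply Rabs_R0); rewrite sumR_0; lra. }
  destruct IH as [C HC]; [intros bc Hbc; apply Hl; now right|].
  destruct (Hl (b, c) (or_introl eq_refl)) as [eb [fb [Pb [Yb Hb]]]].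
  destruct (err_size_bounded _ _ _ _ _ HT Hb) as [Mb HMb].
  exists (norm1 n c * Mb + C); intros d.
  destruct (HC d) as [e [f [P [Y [Hs Hsize]]]]].
  set (a := dot n c d).
  exists (fun t => vcomb a (eb t) 1 (e t)), (fun t => vcomb a (fb t) 1 (f t)),
    (fun t => vcomb a (Pb t) 1 (P t)), (fun t => vcomb a (Yb t) 1 (Y t)).
  split; [exact (err_sys_vcomb a 1 _ _ _ _ _ _ _ _ _ _ Hb Hs)|intros t Ht].
  assert (Hsum : err_size (fun t => vcomb a (eb t) 1 (e t)) (fun t => vcomb a (fb t) 1 (f t))
                   (fun t => vcomb a (Pb t) 1 (P t)) (fun t => vcomb a (Yb t) 1 (Y t)) t
                 <= Rabs a * err_size eb fb Pb Yb t + err_size e f P Y t).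
  { unfold err_size.
    pose proof (norm1_vcomb n a (eb t) 1 (e t)); pose proof (norm1_vcomb n a (fb t) 1 (f t));
    pose proof (norm1_vcomb n a (Pb t) 1 (P t)); pose proof (norm1_vcomb n a (Yb t) 1 (Y t));
    rewrite Rabs_R1 in *; lra. }
  assert (Hprod : Rabs a * err_size eb fb Pb Yb t <= norm1 n c * vnorm n d * Mb).
  { apply Rmult_le_compat; [apply Rabs_pos| |apply Rabs_dot_le|auto].
    unfold err_size; pose proof (norm1_ge0 n (eb t)); pose proof (norm1_ge0 n (fb t));
    pose proof (norm1_ge0 n (Pb t)); pose proof (norm1_ge0 n (Yb t)); lra. }
  specialize (Hsize t Ht); nra.
Qed.

Section Uniqueness.
Variable Rm : mat.
Hypothesis HRinv : forall i j, (i < n1)%nat -> (j < n1)%nat -> mm n1 Rm Rinv i j = idm i j.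
Hypothesis HT : 0 < T.
Hypothesis Hgamma : 0 < gamma.
Hypothesis HH1 : H1 n T A G Gam Q H gamma.
Hypothesis HH2 : H2 n n1 T A G Gam B Q H Rm gamma.

Lemma qf_ctrl Y : qf n1 Rm (ctrl Y) = dot n Y (mv n1 B (ctrl Y)).
Proof.
  unfold qf; rewrite (dot_ext n1 (ctrl Y) (ctrl Y) (mv n1 Rm (ctrl Y)) (mv n (tr B) Y)).
  - now rewrite dot_tr, dot_comm.
  - now intros i Hi.
  - intros i Hi; unfold ctrl; rewrite <- mv_mm, <- (mv_idm n1 (mv n (tr B) Y) i Hi).
    unfold mv at 1 3; apply sumR_ext; intros; now rewrite HRinv.
Qed.

Ltac expand_dots :=
  repeat rewrite ?dot_vaddl, ?dot_vsubl, ?dot_voppl, ?dot_vscall, ?dot_vaddr, ?dot_vsubr,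
    ?dot_vscalr, ?dot_trl, ?mv_madd, ?mv_msub, ?mv_vsub, ?dot_idmr.

(* The derivative of <Y, e - f> - <P, f> along the error system is the integrand of (H2). *)
Lemma deriv_Phi_identity e f P Y :
  dot n (rhs_y e f Y) (vsub e f) + dot n Y (vsub (rhs_x e f P Y) (rhs_m f P))
  - (dot n (rhs_p e f P) f + dot n P (rhs_m f P))
  = qf n Q (vsub e (mv n Gam f)) + qf n1 Rm (ctrl Y) - gamma * dot n P P.
Proof.
  rewrite qf_ctrl; unfold qf, rhs_y, rhs_x, rhs_m, rhs_p; expand_dots.
  rewrite (dot_comm n (mv n Q e) e), (dot_comm n (mv n Q e) f), (dot_comm n (mv n Q (mv n Gam f)) e),
    (dot_comm n (mv n Q (mv n Gam f)) f), (dot_comm n (mv n Q (mv n Gam f)) (mv n Gam f)),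
    (dot_comm n (mv n Q e) (mv n Gam f)).
  ring.
Qed.

(* Once e = f, the derivative of <P, f> is the integrand of (H1) with g = gamma P. *)
Lemma deriv_Psi_identity e f P : veq n e f ->
  dot n (rhs_p e f P) f + dot n P (rhs_m f P)
  = - qf n (Qhat n Gam Q) f + / gamma * dot n (vscal gamma P) (vscal gamma P).
Proof.
  intros Hef; unfold rhs_p, rhs_m, qf, Qhat.
  assert (HIG : veq n (mv n (msub idm Gam) f) (vsub f (mv n Gam f)))
    by (intros i Hi; rewrite mv_msub; unfold vsub; now rewrite mv_idm).
  rewrite (mv_ext n Q (vsub e (mv n Gam f)) (vsub f (mv n Gam f)))
    by (intros i Hi; unfold vsub; now rewrite Hef).
  rewrite !mv_mm, (dot_comm n f (mv n (tr _) _)), dot_trl, (mv_ext n Q _ _ HIG).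
  rewrite (dot_ext n _ _ (mv n (msub idm Gam) f) (vsub f (mv n Gam f))) by (auto; intros i Hi; auto).
  expand_dots; field; lra.
Qed.

Section Homogeneous.
Variables (e f P Y : R -> vec).
Hypothesis Hsys : err_sys (fun _ => 0) e f P Y.

Lemma ctrl_vanishes t : 0 <= t <= T -> veq n1 (ctrl (Y t)) (fun _ => 0).
Proof.
  destruct HH2 as [delta0 [Hdelta0 HH2']].
  destruct Hsys as [He Hf HP HY He0 Hf0 HPT HYT].
  assert (Hnu : cont_on n1 T (fun t => ctrl (Y t))) by (apply cont_on_mv, cont_on_mv, HY).
  set (Phi := fun t => dot n (Y t) (vsub (e t) (f t)) - dot n (P t) (f t)).
  assert (HPhi : Rint (fun t => qf n Q (vsub (e t) (mv n Gam (f t))) + qf n1 Rm (ctrl (Y t))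
                                - gamma * dot n (P t) (P t)) 0 T (Phi T - Phi 0)).
  { assert (Hd := cont_on_vsub n T _ _ (proj1 He) (proj1 Hf)).
    assert (Hq := cont_on_vsub n T _ _ (proj1 He) (cont_on_mv n n T Gam f (proj1 Hf))).
    apply Rint_of_deriv; auto; intros t' Ht'.
    - apply rcont_minus; apply rcont_dot; auto; [apply HY|apply HP|apply Hf].
    - rewrite <- deriv_Phi_identity; unfold Phi.
      apply (dlim_minus (fun s => dot n (Y s) (vsub (e s) (f s))) (fun s => dot n (P s) (f s))).
      + apply (solves_dot n T Y (fun s => vsub (e s) (f s)) (fun s => rhs_y (e s) (f s) (Y s))
                 (fun s => vsub (rhs_x (e s) (f s) (P s) (Y s)) (rhs_m (f s) (P s)))); auto.
        now apply solves_vsub.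
      + now apply (solves_dot n T P f (fun s => rhs_p (e s) (f s) (P s)) (fun s => rhs_m (f s) (P s))).
    - apply rcont_minus; [apply rcont_plus|apply rcont_mult; [apply rcont_const|]];
        apply rcont_dot; auto using cont_on_mv; apply HP. }
  destruct (Rint_exists T (fun t => dot n1 (ctrl (Y t)) (ctrl (Y t))) HT) as [L HL].
  { intros; now apply rcont_dot. }
  assert (HPhiT : Phi T - Phi 0 = - qf n H (e T)).
  { unfold Phi, qf.
    rewrite (dot_ext n (Y 0) (Y 0) (vsub (e 0) (f 0)) (fun _ => 0)), dot_0r
      by (intros i Hi; try reflexivity; unfold vsub; rewrite He0, Hf0 by auto; ring).
    rewrite (dot_ext n (P 0) (P 0) (f 0) (fun _ => 0)), dot_0r by (auto; now intros i Hi).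
    rewrite (dot_ext n (Y T) _ (vsub (e T) (f T)) _ HYT), (dot_ext n (P T) _ (f T) _ HPT)
      by now intros i Hi.
    rewrite dot_voppl, dot_vsubr, (dot_comm n (e T)); ring. }
  pose proof (HH2' _ _ _ _ Hnu He Hf HP He0 Hf0 HPT _ _ HPhi HL).
  apply (sq_norm_Rint_nonpos_eq0 n1 T (fun s => ctrl (Y s)) L); auto; nra.
Qed.

Lemma err_e_eq_f t : 0 <= t <= T -> veq n (e t) (f t).
Proof.
  destruct Hsys as [He Hf _ _ He0 Hf0 _ _].
  intros Ht i Hi; enough (Hw : veq n (vsub (e t) (f t)) (fun _ => 0))
    by (specialize (Hw i Hi); unfold vsub in Hw; lra).
  apply (linear_ode_forward_0 n T A (fun s => vsub (e s) (f s))); auto.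
  - eapply solves_ext; [apply (solves_vsub _ _ _ _ _ _ He Hf)|intros s j Hj Hs].
    unfold rhs_x, rhs_m; rewrite (mv_ext n1 B _ _ (ctrl_vanishes s ltac:(lra))), mv_0, mv_vsub, mv_madd.
    unfold vadd, vsub, vscal; ring.
  - intros j Hj; unfold vsub; rewrite He0, Hf0; auto; ring.
Qed.

Lemma err_P_vanishes t : 0 <= t <= T -> veq n (P t) (fun _ => 0).
Proof.
  destruct HH1 as [eps0 [Heps0 HH1']].
  destruct Hsys as [He Hf HP _ _ Hf0 HPT _].
  pose proof (proj1 Hf) as Hfc; pose proof (proj1 HP) as HPc.
  assert (Hg : cont_on n T (fun s => vscal gamma (P s))) by now apply cont_on_vscal.
  set (Psi := fun t => dot n (P t) (f t)).
  assert (HPsi : Rint (fun t => - qf n (Qhat n Gam Q) (f t)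
                               + / gamma * dot n (vscal gamma (P t)) (vscal gamma (P t)))
                      0 T (Psi T - Psi 0)).
  { apply Rint_of_deriv; auto; intros t' Ht'.
    - now apply rcont_dot.
    - rewrite <- (deriv_Psi_identity (e t')) by (apply err_e_eq_f; lra).
      now apply (solves_dot n T P f (fun s => rhs_p (e s) (f s) (P s)) (fun s => rhs_m (f s) (P s))).
    - apply rcont_plus; [apply rcont_opp|apply rcont_mult; [apply rcont_const|]];
        apply rcont_dot; auto using cont_on_mv. }
  destruct (Rint_exists T (fun t => dot n (vscal gamma (P t)) (vscal gamma (P t))) HT) as [L HL].
  { intros; now apply rcont_dot. }
  assert (HPsiT : Psi T - Psi 0 = qf n H (f T)).
  { unfold Psi, qf.
    rewrite (dot_ext n (P 0) (P 0) (f 0) (fun _ => 0)), dot_0r by (auto; now intros i Hi).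
    rewrite (dot_ext n (P T) (mv n H (f T)) (f T) (f T)), dot_comm; [ring| |now intros i Hi].
    intros i Hi; rewrite HPT, (mv_ext n H (e T) (f T)); auto; apply err_e_eq_f; lra. }
  pose proof (HH1' _ _ Hg Hf Hf0 _ _ HPsi HL).
  intros Ht i Hi.
  assert (HgP := sq_norm_Rint_nonpos_eq0 n T _ L HT Hg HL ltac:(nra) t Ht i Hi).
  unfold vscal in HgP; apply Rmult_integral in HgP; destruct HgP; [lra|auto].
Qed.

Lemma err_f_vanishes t : 0 <= t <= T -> veq n (f t) (fun _ => 0).
Proof.
  apply (linear_ode_forward_0 n T (madd A G) f); auto; [|apply Hsys].
  eapply solves_ext; [apply Hsys|intros s i Hi Hs].
  unfold rhs_m, vadd, vscal; rewrite (err_P_vanishes s) by (auto; lra); ring.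
Qed.

Lemma err_e_vanishes t : 0 <= t <= T -> veq n (e t) (fun _ => 0).
Proof. intros Ht i Hi; rewrite err_e_eq_f, err_f_vanishes; auto. Qed.

Lemma err_Y_vanishes t : 0 <= t <= T -> veq n (Y t) (fun _ => 0).
Proof.
  apply (linear_ode_backward_0 n T (fun i j => - A j i) Y); auto.
  - eapply solves_ext; [apply Hsys|intros s i Hi Hs].
    assert (Hq : veq n (vsub (e s) (mv n Gam (f s))) (fun _ => 0)).
    { intros j Hj; unfold vsub.
      rewrite err_e_vanishes, (mv_ext n Gam _ _ (err_f_vanishes s ltac:(lra))), mv_0; auto; [ring|lra]. }
    unfold rhs_y; rewrite (mv_ext n Q _ _ Hq), mv_0.
    unfold vadd, vopp, mv, tr; rewrite <- sumR_opp; ring_simplify; apply sumR_ext; intros; ring.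
  - intros i Hi; rewrite (err_YT _ _ _ _ _ Hsys), (mv_ext n H _ _ (err_e_vanishes T ltac:(lra))) by auto.
    rewrite mv_0; unfold vopp; ring.
Qed.

End Homogeneous.

Lemma err_sys_unique d e f P Y d' e' f' P' Y' :
  err_sys d e f P Y -> err_sys d' e' f' P' Y' -> veq n d d' ->
  forall t, 0 <= t <= T ->
    veq n (e t) (e' t) /\ veq n (f t) (f' t) /\ veq n (P t) (P' t) /\ veq n (Y t) (Y' t).
Proof.
  intros Hs Hs' Hd t Ht.
  assert (Hd0 : veq n (vcomb 1 d (-1) d') (fun _ => 0))
    by (intros i Hi; unfold vcomb; rewrite Hd; auto; ring).
  pose proof (err_sys_init _ _ _ _ _ _ (err_sys_vcomb 1 (-1) _ _ _ _ _ _ _ _ _ _ Hs Hs') Hd0) as H0.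
  assert (Hsub : forall u v : vec, veq n (vcomb 1 u (-1) v) (fun _ => 0) -> veq n u v)
    by (intros u v Huv i Hi; specialize (Huv i Hi); unfold vcomb in Huv; lra).
  repeat split; apply Hsub.
  - exact (err_e_vanishes _ _ _ _ H0 t Ht).
  - exact (err_f_vanishes _ _ _ _ H0 t Ht).
  - exact (err_P_vanishes _ _ _ _ H0 t Ht).
  - exact (err_Y_vanishes _ _ _ _ H0 t Ht).
Qed.

Lemma err_sys_bound : exists C, forall d e f P Y, err_sys d e f P Y ->
  forall t, 0 <= t <= T -> err_size e f P Y t <= C * vnorm n d.
Proof.
  set (solvable := fun d => exists e f P Y, err_sys d e f P Y).
  destruct (subspace_expansion n solvable) as [l [Hl Hexp]].
  { intros u v a b [e1 [f1 [P1 [Y1 Hs1]]]] [e2 [f2 [P2 [Y2 Hs2]]]].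
    eexists _, _, _, _; exact (err_sys_vcomb a b _ _ _ _ _ _ _ _ _ _ Hs1 Hs2). }
  destruct (err_sys_expand_bound l HT Hl) as [C HC].
  exists C; intros d e f P Y Hs t Ht.
  destruct (HC d) as [e' [f' [P' [Y' [Hs' Hsize]]]]].
  assert (Hd : solvable d) by (exists e, f, P, Y; exact Hs).
  destruct (err_sys_unique _ _ _ _ _ _ _ _ _ _ Hs Hs' (Hexp d Hd) t Ht) as [He [Hf [HP HY]]].
  unfold err_size.
  rewrite (norm1_ext _ _ _ He), (norm1_ext _ _ _ Hf), (norm1_ext _ _ _ HP), (norm1_ext _ _ _ HY).
  now apply Hsize.
Qed.

End Uniqueness.

End Error_system.

Theorem lemma21
  (n n1 : nat) (T : R) (A G Gam B Q H Rm Rinv : mat) (eta m0 : vec) (gamma : R)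
  (hn : (1 <= n)%nat) (hn1 : (1 <= n1)%nat) (hT : 0 < T) (hgamma : 0 < gamma)
  (hQs : symm n Q) (hQ : psd n Q) (hHs : symm n H) (hH : psd n H)
  (hRs : symm n1 Rm) (hR : pd n1 Rm) (hRinv : is_inv n1 Rm Rinv)
  (hH1 : H1 n T A G Gam Q H gamma)
  (hH2 : H2 n n1 T A G Gam B Q H Rm gamma)
  (m p y : R -> vec)
  (hMF : MF_sol n n1 T A G Gam B Q H Rinv eta m0 gamma m p y)
  (hMFu : forall m' p' y' : R -> vec,
      MF_sol n n1 T A G Gam B Q H Rinv eta m0 gamma m' p' y' ->
      forall t, 0 <= t <= T ->
        veq n (m' t) (m t) /\ veq n (p' t) (p t) /\ veq n (y' t) (y t)) :
  exists C : R,
    forall (N : nat) (x0 : nat -> vec) (xN mN pN yN : R -> vec),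
      (1 <= N)%nat ->
      AV_sol n n1 T A G Gam B Q H Rinv eta m0 gamma y N x0 xN mN pN yN ->
      forall t, 0 <= t <= T ->
        vnorm n (vsub (xN t) (m t)) + vnorm n (vsub (mN t) (m t))
        + vnorm n (vsub (pN t) (p t)) + vnorm n (vsub (yN t) (y t))
        <= C * vnorm n (vsub (avg0 N x0) m0).
Proof.
  assert (HRinv : forall i j, (i < n1)%nat -> (j < n1)%nat -> mm n1 Rm Rinv i j = idm i j)
    by (intros i j Hi Hj; apply (hRinv i j Hi Hj)).
  destruct (err_sys_bound n n1 T A G Gam B Q H Rinv gamma Rm HRinv hT hgamma hH1 hH2) as [C HC].
  exists C; intros N x0 xN mN pN yN _ HAV t Ht.
  pose proof (HC _ _ _ _ _ (err_sys_of_AV_MF n n1 T A G Gam B Q H Rinv gamma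
                             eta m0 m p y N x0 xN mN pN yN hMF HAV) t Ht) as Hsize.
  unfold err_size in Hsize.
  pose proof (vnorm_le_norm1 n (vsub (xN t) (m t))); pose proof (vnorm_le_norm1 n (vsub (mN t) (m t))).
  pose proof (vnorm_le_norm1 n (vsub (pN t) (p t))); pose proof (vnorm_le_norm1 n (vsub (yN t) (y t))).
  lra.
Qed.
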